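(* For any p-string $T$ of length $n$, the parameterized suffix tray $\mathsf{PSTray}(T)$ occupies $O(n)$ space (in machine words).
   Context: $\Sigma$ (static alphabet) and $\Pi$ (parameterized alphabet) are disjoint ordered alphabets, every character of $\Pi$ being smaller than every character of $\Sigma$; a p-string is a string over $\Sigma\cup\Pi$. $T$ ends with $\$\in\Sigma$, occurring nowhere else and larger than all other characters. $\Pi_T$, $\Sigma_T$ are the sets of characters of $\Pi$, $\Sigma$ occurring in $T$; $\pi=|\Pi_T|$, $\sigma=|\Sigma_T|$. For $x\in\Pi_T\cup\Sigma_T$, $\mathrm{rank}(x)$ is the rank of $x$ in $\Pi_T\cup\Sigma_T$ (so ranks lie in $\{1,\dots,\sigma+\pi\}$). Two p-strings $x,y$ of equal length p-match ($x\approx y$) if there is a bijection $f$ on $\Sigma\cup\Pi$ which is the identity on $\Sigma$ with $x[i]=f(y[i])$ for all $i$. $\mathrm{spe}(w)$ is the lexicographically smallest p-string p-matching $w$. $\mathrm{prev}(w)$ is the string of length $|w|$ with $\mathrm{prev}(w)[i]=w[i]$ if $w[i]\in\Sigma$, $0$ if $w[i]\in\Pi$ does not occur in $w[1..i-1]$, and otherwise $i-j$ for the largest $j<i$ with $w[j]=w[i]$. $\mathsf{PSTree}(T)$ is the compact trie of $\{\mathrm{prev}(T[i..]) : 1\le i\le |T|\}$ with leaves in lexicographic order. $\mathsf{PSA}(T)$ is the array with $\mathsf{PSA}(T)[i]=j$ iff $\mathrm{prev}(T[j..])$ is the $i$-th lexicographically smallest among $\{\mathrm{prev}(T[k..])\}$;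 $\mathsf{PLCP}(T)[1]=0$ and $\mathsf{PLCP}(T)[i]$ ($i\ge2$) is the length of the longest common prefix of $\mathrm{prev}(T[\mathsf{PSA}(T)[i-1]..])$ and $\mathrm{prev}(T[\mathsf{PSA}(T)[i]..])$. A node of $\mathsf{PSTree}(T)$ is a p-node if its subtree has at least $\max\{\sigma,\pi\}$ leaves, and a branching p-node if moreover at least two of its children are p-nodes. For a branching p-node $\mathrm{prev}(v)$ ($v$ a substring of $T$), its p-array $A(\mathrm{prev}(v))$ has length $\sigma+\pi$, and for each $x\in\Sigma_T\cup\Pi_T$ the entry $A(\mathrm{prev}(v))[\mathrm{rank}(x)]$ is a pointer to the child $u$ of $\mathrm{prev}(v)$ such that $\mathrm{prev}(\mathrm{spe}(v)x)$ is a prefix of (the string of) $u$, or nil if no such child exists. $\mathsf{PSTray}(T)$ consists of $\mathsf{PSA}(T)$, $\mathsf{PLCP}(T)$, and $\mathsf{PSTree}(T)$ with each branching p-node augmented by its p-array. *)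

From HB Require Import structures.
From mathcomp Require Import all_boot all_order.
Set Implicit Arguments. Unset Strict Implicit. Unset Printing Implicit Defensive.
Import Order.TTheory.
Local Open Scope order_scope.

(* p-strings: a character is [inl p] with p in the parameterized alphabet Pi
   (type P) or [inr s] with s in the static alphabet Sigma (type S).
   A character of prev(w) is [inl s] (static char s, kept as is) or
   [inr k] (the integer k). *)
Section PSTray.
Context {dP dS : Order.disp_t} {P : orderType dP} {S : orderType dS}.

Definition pchar := (P + S)%type.
Definition prevchar := (S + nat)%type.

(* prev(w)[i], 0-based position i, c = w[i]:
   static chars unchanged; a parameterized char gets 0 if it does not occur
   in w[0..i-1], and otherwise i - j for the largest j < i with w[j] = w[i]. *)
Definition prev_at (w : seq pchar) (i : nat) (c : pchar) : prevchar :=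
  match c with
  | inr s => inl s
  | inl p => if inl p \in take i w
             then inr (index (inl p) (rev (take i w))).+1
             else inr 0%N
  end.

Definition prevw (w : seq pchar) : seq prevchar :=
  map (fun ic : nat * pchar => prev_at w ic.1 ic.2) (zip (iota 0 (size w)) w).

(* the strings prev(T[i..]), 1 <= i <= |T|: the leaves of PSTree(T) *)
Definition prev_suffixes (T : seq pchar) : seq (seq prevchar) :=
  [seq prevw (drop i T) | i <- iota 0 (size T)].

Definition sigmaT (T : seq pchar) : nat :=
  size (undup (pmap (fun c : pchar => if c is inr s then Some s else None) T)).
Definition piT (T : seq pchar) : nat :=
  size (undup (pmap (fun c : pchar => if c is inl p then Some p else None) T)).

(* all prefixes of all leaf strings (the loci of the uncompacted trie) *)
Definition trie_loci (T : seq pchar) : seq (seq prevchar) :=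
  undup (flatten [seq [seq take k l | k <- iota 0 (size l).+1]
                 | l <- prev_suffixes T]).

Definition next_chars (T : seq pchar) (x : seq prevchar) : seq prevchar :=
  undup [seq nth (inr 0%N) l (size x)
        | l <- prev_suffixes T & prefix x l && (size x < size l)%N].

(* explicit nodes of the compact trie PSTree(T): the root, the leaves, and
   the branching internal loci *)
Definition is_node (T : seq pchar) (x : seq prevchar) : bool :=
  [|| x == [::], x \in prev_suffixes T | (2 <= size (next_chars T x))%N].

Definition pstree_nodes (T : seq pchar) : seq (seq prevchar) :=
  [seq x <- trie_loci T | is_node T x].

Definition sprefix (u v : seq prevchar) : bool := prefix u v && (size u < size v)%N.

Definition children (T : seq pchar) (v : seq prevchar) : seq (seq prevchar) :=
  [seq u <- pstree_nodes T | sprefix v u &&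
     ~~ has (fun w => sprefix v w && sprefix w u) (pstree_nodes T)].

Definition nleaves (T : seq pchar) (v : seq prevchar) : nat :=
  count (prefix v) (prev_suffixes T).

Definition is_pnode (T : seq pchar) (v : seq prevchar) : bool :=
  (maxn (sigmaT T) (piT T) <= nleaves T v)%N.

Definition is_branching_pnode (T : seq pchar) (v : seq prevchar) : bool :=
  is_pnode T v && (2 <= count (is_pnode T) (children T v))%N.

(* Space (in machine words) of PSTray(T):
   PSA(T) : |T| words, PLCP(T) : |T| words,
   PSTree(T) : a constant number of words per node (we count one word per node;
               constants are absorbed in the O(.)),
   p-arrays : sigma + pi words for each branching p-node. *)
Definition pstray_space (T : seq pchar) : nat :=
  (size T + size T + size (pstree_nodes T)
   + count (is_branching_pnode T) (pstree_nodes T) * (sigmaT T + piT T))%N.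

Definition valid_text (T : seq pchar) (dollar : S) : Prop :=
  exists T0 : seq pchar,
    [/\ T = rcons T0 (inr dollar), inr dollar \notin T0
      & forall s : S, inr s \in T0 -> s < dollar].

End PSTray.

From HB Require Import structures.
From mathcomp Require Import all_boot all_order.
From mathcomp Require Import zify.
Set Implicit Arguments. Unset Strict Implicit. Unset Printing Implicit Defensive.
Local Open Scope nat_scope.

(* With n = |T|, PSA(T) and PLCP(T)
   take n words each, so it suffices to show that
     (a) PSTree(T) has at most 2n + 1 nodes, and
     (b) the p-arrays take at most 2n words in total.
   Both follow from one counting principle on the trie of the n strings
   prev(T[i..]): if every node in a family Q has at least m leaves below it
   and at least two of its one-character extensions still have m leaves
   below them, then m * |Q| <= n.  It is proved by induction down the trie,
   showing m * (#Q-nodes below v + 1) <= #leaves below v whenever v has at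
   least m leaves, using that the leaves below v are split among its
   extensions v a.  With m = 1 and Q the branching internal nodes this gives
   (a) (root, n leaves, at most n branching nodes).  With m = max(sigma, pi)
   and Q the branching p-nodes (two distinct p-node children start with two
   distinct characters) it gives #branching p-nodes * max(sigma, pi) <= n,
   hence (b) since sigma + pi <= 2 max(sigma, pi).  Altogether the space is
   at most 7n. *)

Lemma count_sum (X : Type) (a : pred X) (s : seq X) :
  count a s = \sum_(x <- s) (a x : nat).
Proof. by elim: s => [|x s IH]; rewrite ?big_nil ?big_cons //= IH. Qed.

Lemma count_predU_le (X : Type) (a1 a2 : pred X) (s : seq X) :
  count (predU a1 a2) s <= count a1 s + count a2 s.
Proof. by rewrite -count_predUI leq_addr. Qed.

Section Prefixes.
Variables (X : eqType) (x0 : X).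
Implicit Types u v w l : seq X.

Lemma prefix_nth v l i : prefix v l -> i < size v -> nth x0 l i = nth x0 v i.
Proof. by move=> /prefixP [s ->] hi; rewrite nth_cat hi. Qed.

Lemma prefix_rcons_nth v l : prefix v l -> size v < size l ->
  prefix (rcons v (nth x0 l (size v))) l.
Proof.
move=> hv hs; rewrite prefixE size_rcons (take_nth x0) //.
by move: hv; rewrite prefixE => /eqP ->.
Qed.

Lemma prefix_rcons_nthE v l a : prefix (rcons v a) l ->
  [/\ a = nth x0 l (size v), prefix v l & size v < size l].
Proof.
move=> h; have hs := size_prefix h; rewrite size_rcons in hs.
split=> //; last exact: prefix_trans (prefix_rcons _ _) h.
by rewrite (prefix_nth h) ?size_rcons // nth_rcons ltnn eqxx.
Qed.

Lemma prefix_neq_size_lt u w : prefix u w -> u != w -> size u < size w.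
Proof.
move=> hp hne; rewrite ltn_neqAle size_prefix // andbT; apply/eqP => he.
by move: hp hne; rewrite prefixE he take_size => /eqP ->; rewrite eqxx.
Qed.

Lemma first_mismatch u w : ~~ prefix u w -> ~~ prefix w u ->
  exists j, [/\ j < size u, j < size w, take j u = take j w
              & nth x0 u j != nth x0 w j].
Proof.
elim: u w => [|x u IH] [|y w] //; rewrite !prefix_cons.
case: (eqVneq x y) => [<-|hxy] /= h1 h2; last by exists 0.
by have [j [hj1 hj2 hj3 hj4]] := IH w h1 h2; exists j.+1; rewrite /= hj3.
Qed.

End Prefixes.

Section SuffixTrie.
Context {dP dS : Order.disp_t} {P : orderType dP} {S : orderType dS}.
Variable T : seq (@pchar _ _ P S).

Local Notation L := (prev_suffixes T).
Local Notation N := (pstree_nodes T).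
Local Notation nl := (nleaves T).
Local Notation A := (next_chars T).
Local Notation str := (seq (@prevchar _ S)).
Local Notation x0 := (inr 0%N : @prevchar _ S).
Local Notation m0 := (maxn (sigmaT T) (piT T)).

Lemma size_prev_suffixes : size L = size T.
Proof. by rewrite /prev_suffixes size_map size_iota. Qed.

Lemma nleaves_le v : nl v <= size T.
Proof. by rewrite -size_prev_suffixes; exact: count_size. Qed.

Lemma nleaves_root : nl [::] = size T.
Proof.
rewrite /nleaves (eq_count (a2 := predT)) ?count_predT ?size_prev_suffixes //.
by move=> l; rewrite prefix0s.
Qed.

Lemma nleaves_prefix v w : prefix v w -> nl w <= nl v.
Proof. by move=> hvw; apply: sub_count => l /= hwl; exact: prefix_trans hvw hwl. Qed.

Lemma mem_next_chars v a : a \in A v <->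
  exists l, [/\ l \in L, prefix v l, size v < size l & a = nth x0 l (size v)].
Proof.
rewrite /next_chars mem_undup; split.
  by move=> /mapP [l]; rewrite mem_filter => /andP [/andP [h1 h2] h3] ->; exists l.
by move=> [l [h1 h2 h3 ->]]; apply: map_f; rewrite mem_filter h1 h2 h3.
Qed.

Lemma next_char_nleaves v a : a \in A v -> 0 < nl (rcons v a).
Proof.
move=> /mem_next_chars [l [hl hp hs ->]]; rewrite /nleaves -has_count.
by apply/hasP; exists l => //; exact: prefix_rcons_nth.
Qed.

Lemma sum_nleaves_next_chars v : \sum_(a <- A v) nl (rcons v a) <= nl v.
Proof.
rewrite /nleaves (count_sum (prefix v)).
under eq_bigr do rewrite count_sum.
rewrite exchange_big /=; apply: leq_sum => l _; rewrite -count_sum.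
case hv: (prefix v l).
  apply: leq_trans (_ : count (pred1 (nth x0 l (size v))) (A v) <= 1).
    by apply: sub_count => a /= /(prefix_rcons_nthE x0) [-> _ _].
  by rewrite count_uniq_mem ?undup_uniq // leq_b1.
rewrite leqn0 -(count_pred0 (A v)); apply/eqP; apply: eq_count => a /=.
by apply/negbTE/negP => /(prefix_rcons_nthE x0) [_ h _]; rewrite h in hv.
Qed.

Lemma mem_trie_loci x : x \in trie_loci T <->
  exists l k, [/\ l \in L, k <= size l & x = take k l].
Proof.
rewrite /trie_loci mem_undup; split.
  move=> /flattenP [s /mapP [l hl ->]] /mapP [k]; rewrite mem_iota add0n ltnS.
  by move=> hk ->; exists l, k.
move=> [l [k [hl hk ->]]]; apply/flattenP.
exists [seq take k0 l | k0 <- iota 0 (size l).+1]; first exact: map_f.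
by apply/mapP; exists k => //; rewrite mem_iota add0n ltnS.
Qed.

Lemma node_below_leaf w : w \in N -> exists2 l, l \in L & prefix w l.
Proof.
rewrite mem_filter => /andP [_ /mem_trie_loci [l [k [hl _ ->]]]].
by exists l => //; exact: prefix_take.
Qed.

Lemma uniq_nodes : uniq N. Proof. exact/filter_uniq/undup_uniq. Qed.

Lemma branching_locus_node u l a b : l \in L -> prefix u l -> a \in A u ->
  b \in A u -> a != b -> u \in N.
Proof.
move=> hl hul ha hb hab; rewrite mem_filter; apply/andP; split.
  apply/orP; right; apply/orP; right.
  have := @uniq_leq_size _ [:: a; b] (A u); rewrite /= inE hab /=.
  by apply=> // c; rewrite !inE => /orP [/eqP ->|/eqP ->].
apply/mem_trie_loci; exists l, (size u); split; rewrite ?size_prefix //.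
by apply/esym/eqP; rewrite -prefixE.
Qed.

Definition count_below (Q : pred str) (v : str) : nat :=
  count (fun w => Q w && prefix v w) N.

Lemma count_below_split Q v :
  count_below Q v <= (Q v && (v \in N)) + \sum_(a <- A v) count_below Q (rcons v a).
Proof.
apply: (@leq_trans (count (fun w => Q w && (w == v)) N +
    \sum_(w <- N) count (fun a => Q w && prefix (rcons v a) w) (A v))).
  rewrite /count_below !count_sum -big_split /= big_seq [X in _ <= X]big_seq.
  apply: leq_sum => w hw; case hQ: (Q w) => //=.
  case hp: (prefix v w) => //=; case: eqP => [//|/eqP hne].
  rewrite add0n -has_count; apply/hasP.
  have hs : size v < size w by apply: prefix_neq_size_lt hp _; rewrite eq_sym.
  have [l hl hwl] := node_below_leaf hw.
  exists (nth x0 w (size v)); last exact: prefix_rcons_nth.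
  apply/mem_next_chars; exists l; split; first by [].
  - exact: prefix_trans hp hwl.
  - exact: leq_trans hs (size_prefix hwl).
  - by rewrite (prefix_nth x0 hwl hs).
apply: leq_add.
  case hQ: (Q v) => /=.
    rewrite -count_uniq_mem ?uniq_nodes //.
    by apply: sub_count => w /= /andP [_ /eqP ->].
  rewrite leqn0 -(count_pred0 N); apply/eqP/eq_count => w /=.
  by apply/negbTE/negP => /andP [hw /eqP e]; rewrite e hQ in hw.
under eq_bigr do rewrite count_sum.
rewrite exchange_big /=; apply: leq_sum => a _; by rewrite /count_below count_sum.
Qed.

Section HeavyBranching.
Variables (Q : pred str) (m : nat).
Hypothesis Q_heavy : forall w, Q w -> m <= nl w.
Hypothesis Q_branching : forall v, Q v -> v \in N ->
  2 <= count (fun a => m <= nl (rcons v a)) (A v).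

Lemma count_below_light v : nl v < m -> count_below Q v = 0.
Proof.
move=> hv; apply/eqP; rewrite -leqn0 -(count_pred0 N) eq_leq //.
apply: eq_count => w /=; apply/negbTE/negP => /andP [hq hp].
by have := Q_heavy hq; have := nleaves_prefix hp; lia.
Qed.

Lemma count_below_step v :
  (forall a, a \in A v -> m <= nl (rcons v a) ->
     m * (count_below Q (rcons v a)).+1 <= nl (rcons v a)) ->
  m <= nl v -> m * (count_below Q v).+1 <= nl v.
Proof.
move=> IH hv.
set below := \sum_(a <- A v) count_below Q (rcons v a).
set heavy := count (fun a => m <= nl (rcons v a)) (A v).
have hsum : m * below + m * heavy <= nl v.
  apply: leq_trans (sum_nleaves_next_chars v).
  rewrite /below /heavy count_sum !big_distrr -big_split /= big_seq.
  rewrite [X in _ <= X]big_seq; apply: leq_sum => a ha.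
  case h: (m <= nl (rcons v a)); first by have := IH a ha h; rewrite /=; lia.
  by rewrite count_below_light /=; lia.
have hsplit := count_below_split Q v; rewrite -/below in hsplit.
case hq: (Q v && (v \in N)).
  have : 2 <= heavy by case/andP: hq; exact: Q_branching.
  by rewrite hq /= in hsplit; nia.
rewrite hq /= in hsplit; case: (posnP heavy) => [heavy0|]; last by nia.
suff below0 : below = 0.
  have -> : count_below Q v = 0 by move: hsplit; rewrite below0; lia.
  by rewrite muln1.
rewrite /below big_seq; apply: big1 => a ha; apply: count_below_light.
rewrite ltnNge; apply/negP => h.
have : has (fun a => m <= nl (rcons v a)) (A v) by apply/hasP; exists a.
by rewrite has_count -/heavy heavy0.
Qed.

Lemma count_below_bound v : m <= nl v -> m * (count_below Q v).+1 <= nl v.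
Proof.
set K := \max_(l <- L) size l.
have depth w a : a \in A w -> size w < K.
  move=> /mem_next_chars [l [hl _ hs _]]; apply: leq_trans hs _.
  exact: (@leq_bigmax_seq _ _ xpredT (fun l => size l) l hl).
suff : forall k w, K <= size w + k -> m <= nl w -> m * (count_below Q w).+1 <= nl w.
  by move=> /(_ K v); apply; lia.
elim=> [|k IHk] w hk; apply: count_below_step => a ha.
  by have := depth _ _ ha; lia.
by apply: IHk; rewrite size_rcons; lia.
Qed.

Lemma heavy_branching_bound : m * count Q N <= size T.
Proof.
case: (leqP m (size T)) => hm.
  have := count_below_bound (v := [::]); rewrite nleaves_root => /(_ hm).
  rewrite /count_below (eq_count (a2 := Q)) => [|w]; last by rewrite prefix0s andbT.
  nia.
suff -> : count Q N = 0 by rewrite muln0.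
apply/eqP; rewrite -leqn0 -(count_pred0 N) eq_leq //; apply: eq_count => w /=.
by apply/negbTE/negP => hq; have := Q_heavy hq; have := nleaves_le w; lia.
Qed.

End HeavyBranching.

Lemma mem_children v c : c \in children T v ->
  [/\ c \in N, sprefix v c & ~~ has (fun w => sprefix v w && sprefix w c) N].
Proof. by rewrite mem_filter => /andP [/andP [h1 h2] h3]. Qed.

(* Distinct children of v start with distinct characters: otherwise their
   first mismatch would be a branching node strictly between v and them. *)
Lemma children_next_char_neq v c1 c2 :
  c1 \in children T v -> c2 \in children T v -> c1 != c2 ->
  nth x0 c1 (size v) != nth x0 c2 (size v).
Proof.
move=> /mem_children [hN1 /andP [hv1 hs1] hc1].
move=> /mem_children [hN2 /andP [hv2 hs2] hc2] hne; apply/negP => heq.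
have np12 : ~~ prefix c1 c2.
  apply/negP => h; move/hasPn: hc2 => /(_ c1 hN1).
  by rewrite /sprefix hv1 hs1 h prefix_neq_size_lt.
have np21 : ~~ prefix c2 c1.
  apply/negP => h; move/hasPn: hc1 => /(_ c2 hN2).
  by rewrite /sprefix hv2 hs2 h prefix_neq_size_lt // eq_sym.
have [j [hj1 hj2 hj12 hneq]] := first_mismatch x0 np12 np21.
have hvj : size v < j.
  rewrite ltnNge leq_eqVlt; apply/negP => /orP [/eqP e|hlt].
    by move: hneq; rewrite e (eqP heq) eqxx.
  by move: hneq; rewrite (prefix_nth x0 hv1 hlt) (prefix_nth x0 hv2 hlt) eqxx.
have [l1 hl1 hp1] := node_below_leaf hN1.
have [l2 hl2 hp2] := node_below_leaf hN2.
set u := take j c1.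
have hsu : size u = j by rewrite size_take hj1.
have hu1 : prefix u l1 := prefix_trans (prefix_take _ _) hp1.
have hu2 : prefix u l2 by rewrite /u hj12; exact: prefix_trans (prefix_take _ _) hp2.
have next_in l c : l \in L -> prefix c l -> prefix u l -> j < size c ->
    nth x0 c j \in A u.
  move=> hl hcl hul hjc; apply/mem_next_chars; exists l; split=> //.
    by rewrite hsu; apply: leq_trans hjc (size_prefix hcl).
  by rewrite hsu (prefix_nth x0 hcl hjc).
have huN : u \in N.
  exact: branching_locus_node hl1 hu1 (next_in _ _ hl1 hp1 hu1 hj1)
           (next_in _ _ hl2 hp2 hu2 hj2) hneq.
move/hasPn: hc1 => /(_ u huN); rewrite /sprefix hsu hvj hj1 prefix_take !andbT /=.
have -> : v = take (size v) c1 by move: hv1; rewrite prefixE => /eqP.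
by rewrite /u -(@take_takel _ (size v) j c1) ?prefix_take // ltnW.
Qed.

(* A branching p-node has two extensions with at least max(sigma, pi) leaves:
   the first characters of two of its p-node children. *)
Lemma branching_pnode_heavy v : is_branching_pnode T v ->
  2 <= count (fun a => m0 <= nl (rcons v a)) (A v).
Proof.
move=> /andP [_]; rewrite -size_filter -size_filter.
set C := [seq c <- children T v | is_pnode T c] => hC.
set first := fun c : str => nth x0 c (size v).
have uniqC : uniq C by apply/filter_uniq/filter_uniq/uniq_nodes.
have sub_children : {subset C <= children T v}.
  by move=> c; rewrite mem_filter => /andP [].
have inj_first : {in C &, injective first}.
  move=> c1 c2 /sub_children h1 /sub_children h2; rewrite /first => e.
  by apply/eqP; apply/negPn/negP => /(children_next_char_neq h1 h2); rewrite e eqxx.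
apply: leq_trans hC _; rewrite -(size_map first).
apply: uniq_leq_size; first by rewrite map_inj_in_uniq.
move=> a /mapP [c]; rewrite mem_filter => /andP [hp hch] ->.
have [hN /andP [hv hs] _] := mem_children hch.
have [l hl hcl] := node_below_leaf hN.
rewrite mem_filter; apply/andP; split.
  exact: leq_trans hp (nleaves_prefix (prefix_rcons_nth x0 hv hs)).
apply/mem_next_chars; exists l; split => //; first exact: prefix_trans hv hcl.
  exact: leq_trans hs (size_prefix hcl).
by rewrite /first (prefix_nth x0 hcl hs).
Qed.

Lemma parray_space :
  count (is_branching_pnode T) N * (sigmaT T + piT T) <= 2 * size T.
Proof.
have hm : m0 * count (is_branching_pnode T) N <= size T.
  apply: heavy_branching_bound; first by move=> w /andP [].
  by move=> v hv _; exact: branching_pnode_heavy.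
have hs : sigmaT T + piT T <= 2 * m0.
  by have := leq_maxl (sigmaT T) (piT T); have := leq_maxr (sigmaT T) (piT T); lia.
by apply: leq_trans (leq_mul (leqnn _) hs) _; nia.
Qed.

Lemma pstree_size : size N <= (size T).*2.+1.
Proof.
set Q := fun x : str => 2 <= size (A x).
have hQ : 1 * count Q N <= size T.
  apply: heavy_branching_bound => [w|v].
    rewrite /Q; case hA: (A w) => [|a s] //= _.
    have ha : a \in A w by rewrite hA mem_head.
    exact: leq_trans (next_char_nleaves ha) (nleaves_prefix (prefix_rcons _ _)).
  by rewrite (eq_in_count (a2 := predT)) ?count_predT // => a /next_char_nleaves.
have hroot : count (pred1 [::]) N <= 1.
  by rewrite count_uniq_mem ?uniq_nodes // leq_b1.
have hleaves : count (mem L) N <= size T.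
  rewrite -size_filter -size_prev_suffixes.
  apply: uniq_leq_size; first exact/filter_uniq/uniq_nodes.
  by move=> x; rewrite mem_filter => /andP [].
have -> : size N = count (is_node T) N.
  by rewrite -count_predT; apply: eq_in_count => x; rewrite mem_filter => /andP [].
apply: leq_trans (count_predU_le (pred1 [::]) (predU (mem L) Q) N) _.
rewrite -addnn -add1n.
apply: leq_add => //; apply: leq_trans (count_predU_le _ _ _) _.
by rewrite mul1n in hQ; exact: leq_add.
Qed.

Lemma pstray_space_bound : 0 < size T -> pstray_space T <= 7 * size T.
Proof. by move=> hn; have := pstree_size; have := parray_space; rewrite /pstray_space; lia. Qed.

End SuffixTrie.

Theorem mainTheorem2 :
  exists c : nat,
    forall (dP dS : Order.disp_t) (P : orderType dP) (S : orderType dS)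
           (T : seq (@pchar _ _ P S)) (dollar : S),
      valid_text T dollar ->
      (pstray_space T <= c * size T)%N.
Proof.
exists 7 => dP dS P S T dollar [T0 [-> _ _]].
by apply: pstray_space_bound; rewrite size_rcons.
Qed.
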